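(* Let $M\ge1$ and let $F_1,\dots,F_M:\mathbb{R}^d\to\mathbb{R}$ be differentiable functions, each with $L$-Lipschitz continuous gradient ($L>0$) and each $\Upsilon$-strongly convex ($\Upsilon>0$). Let $w_1,\dots,w_M>0$ with $\sum_m w_m=1$, define the global loss $\mathcal{L}(\theta)=\sum_{m=1}^M w_m F_m(\theta)$ and let $\theta^*$ be its minimizer. Fix $\epsilon_{\mathrm{Local}}\in(0,1)$, $\epsilon_{\mathrm{UAV}}\in(0,1)$ and $\varrho$ with $0<\varrho\le \Upsilon/L$. Let $\theta[0]\in\mathbb{R}^d$ and generate a sequence as follows: given $\theta[n]$, for each $m$ define the local objective $$G_{m,n}(h)=F_m(\theta[n]+h)-\bigl(\nabla F_m(\theta[n])-\varrho\nabla\mathcal{L}(\theta[n])\bigr)^{\mathsf T}h,$$ let $h_m[n]$ be any vector satisfying $$G_{m,n}(h_m[n])-\min_h G_{m,n}(h)\le \epsilon_{\mathrm{Local}}\Bigl(G_{m,n}(0)-\min_h G_{m,n}(h)\Bigr),$$ and set $\theta[n+1]=\theta[n]+\frac{1}{M}\sum_{m=1}^M h_m[n]$. Define $$\check N=\frac{2L^2}{\Upsilon^2\varrho(1-\epsilon_{\mathrm{Local}})}\ln\!\left(\frac{1}{\epsilon_{\mathrm{UAV}}}\right).$$ Then for every integer $n\ge\check N$, $$\mathcal{L}(\theta[n])-\mathcal{L}(\theta^* )\le\epsilon_{\mathrm{UAV}}\bigl(\mathcal{L}(\theta[0])-\mathcal{L}(\theta^* )\bigr),$$ i.e. $\check N$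 global (UAV) aggregation rounds suffice to reach global accuracy $\epsilon_{\mathrm{UAV}}$.
   Context: This models federated learning with $M$ IoT devices and a UAV acting as aggregation server: $F_m$ is the local loss of device $m$ on its dataset $\mathcal{D}_m$, the weights are $w_m=|\mathcal{D}_m|/\sum_k|\mathcal{D}_k|$, $h_m[n]$ is the local model update of device $m$ computed to local accuracy $\epsilon_{\mathrm{Local}}$, and the UAV aggregates by averaging the updates. $\Upsilon$-strong convexity means $F(y)\ge F(x)+\nabla F(x)^{\mathsf T}(y-x)+\frac{\Upsilon}{2}\|y-x\|^2$ for all $x,y$. *)

From HB Require Import structures.
From mathcomp Require Import all_boot all_order all_algebra.
From mathcomp Require Import all_classical all_reals all_analysis.
Set Implicit Arguments. Unset Strict Implicit. Unset Printing Implicit Defensive.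
Import Order.TTheory GRing.Theory Num.Theory.
Import numFieldNormedType.Exports.
Local Open Scope ring_scope.

Definition dotv {R : realType} {d : nat} (u v : 'rV[R]_d) : R :=
  \sum_(i < d) u ord0 i * v ord0 i.

Definition enorm {R : realType} {d : nat} (u : 'rV[R]_d) : R :=
  Num.sqrt (dotv u u).

Definition is_gradient {R : realType} {d : nat}
  (F : 'rV[R]_d -> R) (g : 'rV[R]_d -> 'rV[R]_d) : Prop :=
  forall x, differentiable F x /\ forall h, 'd F x h = dotv (g x) h.

Definition lipschitz_grad {R : realType} {d : nat}
  (L : R) (g : 'rV[R]_d -> 'rV[R]_d) : Prop :=
  forall x y, enorm (g x - g y) <= L * enorm (x - y).

Definition strongly_convex {R : realType} {d : nat} (U : R)
  (F : 'rV[R]_d -> R) (g : 'rV[R]_d -> 'rV[R]_d) : Prop :=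
  forall x y, F x + dotv (g x) (y - x) + U / 2 * dotv (y - x) (y - x) <= F y.

Definition local_obj {R : realType} {d : nat}
  (F : 'rV[R]_d -> R) (gF gL : 'rV[R]_d -> 'rV[R]_d) (rho : R)
  (th : 'rV[R]_d) (h : 'rV[R]_d) : R :=
  F (th + h) - dotv (gF th - rho *: gL th) h.

Definition local_accurate {R : realType} {d : nat}
  (G : 'rV[R]_d -> R) (eps : R) (h : 'rV[R]_d) : Prop :=
  exists hstar, (forall h', G hstar <= G h') /\
    G h - G hstar <= eps * (G 0 - G hstar).

(* Each aggregation round shrinks the optimality gap of the global loss Lg by
   the factor 1 - (1 - eps_Local) rho U / L.  Comparing with the point
   -(rho / L) grad Lg, the exact minimiser of G_{m,n} lies at least
   rho^2 |grad Lg|^2 / (2 L) below G_{m,n}(0); an eps_Local-accurate h_m[n]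
   keeps a (1 - eps_Local) share of this, while strong convexity of F_m charges
   it U/2 |h_m[n]|^2.  The bound survives averaging over m (Jensen for the
   quadratic term), and as rho L <= U, smoothness of Lg turns it into a
   decrease of (1 - eps_Local) rho / (2 L) |grad Lg|^2, which the
   Polyak-Lojasiewicz inequality |grad Lg|^2 >= 2 U (Lg - Lg* ) converts into
   the contraction.  Finally 1 - x <= exp(-x) and U <= L show that N-check
   rounds suffice. *)
From HB Require Import structures.
From mathcomp Require Import all_boot all_order all_algebra.
From mathcomp Require Import all_classical all_reals all_analysis.
From mathcomp Require Import ring lra.
Import Order.TTheory GRing.Theory Num.Theory.
Import numFieldNormedType.Exports.
Local Open Scope ring_scope.

Section InnerProduct.
Context {R : realType} {d : nat}.
Implicit Types (u v x : 'rV[R]_d) (s : R).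

Lemma dotvC u v : dotv u v = dotv v u.
Proof. by apply: eq_bigr => i _; rewrite mulrC. Qed.

Lemma dotvDl u v x : dotv (u + v) x = dotv u x + dotv v x.
Proof. by rewrite /dotv -big_split; apply: eq_bigr => i _; rewrite mxE mulrDl. Qed.

Lemma dotvZl s u v : dotv (s *: u) v = s * dotv u v.
Proof. by rewrite /dotv mulr_sumr; apply: eq_bigr => i _; rewrite mxE mulrA. Qed.

Lemma dotvNl u v : dotv (- u) v = - dotv u v.
Proof. by rewrite -scaleN1r dotvZl mulN1r. Qed.

Lemma dotvBl u v x : dotv (u - v) x = dotv u x - dotv v x.
Proof. by rewrite dotvDl dotvNl. Qed.

Lemma dotvDr u v x : dotv x (u + v) = dotv x u + dotv x v.
Proof. by rewrite dotvC dotvDl !(dotvC x). Qed.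

Lemma dotvZr s u v : dotv v (s *: u) = s * dotv v u.
Proof. by rewrite dotvC dotvZl dotvC. Qed.

Lemma dotvNr u v : dotv v (- u) = - dotv v u.
Proof. by rewrite dotvC dotvNl dotvC. Qed.

Lemma dotvBr u v x : dotv x (u - v) = dotv x u - dotv x v.
Proof. by rewrite dotvDr dotvNr. Qed.

Lemma dotv0r u : dotv u 0 = 0.
Proof. by rewrite /dotv big1 // => i _; rewrite mxE mulr0. Qed.

Lemma dotv_ge0 u : 0 <= dotv u u.
Proof. by rewrite /dotv sumr_ge0 // => i _; rewrite -expr2 sqr_ge0. Qed.

Lemma dotv_suml n (a : 'I_n -> 'rV[R]_d) v :
  dotv (\sum_(m < n) a m) v = \sum_(m < n) dotv (a m) v.
Proof.
elim: n a => [|n IH] a; first by rewrite !big_ord0 /dotv big1 // => i _; rewrite mxE mul0r.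
by rewrite !big_ord_recr /= dotvDl IH.
Qed.

Lemma dotv_sumr n (a : 'I_n -> 'rV[R]_d) v :
  dotv v (\sum_(m < n) a m) = \sum_(m < n) dotv v (a m).
Proof. by rewrite dotvC dotv_suml; apply: eq_bigr => i _; rewrite dotvC. Qed.

Lemma enorm_sq u : enorm u ^+ 2 = dotv u u.
Proof. by rewrite /enorm sqr_sqrtr // dotv_ge0. Qed.

Lemma enormZ s u : 0 <= s -> enorm (s *: u) = s * enorm u.
Proof.
move=> s_ge0; rewrite /enorm dotvZl dotvZr mulrA -expr2.
by rewrite sqrtrM ?sqr_ge0 // sqrtr_sqr ger0_norm.
Qed.

Lemma dotv_young s u v : 0 < s -> dotv u v <= (s * dotv u u + dotv v v / s) / 2.
Proof.
move=> s_gt0; have := dotv_ge0 (s *: u - v).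
rewrite dotvBl !dotvBr !dotvZl !dotvZr (dotvC v u) => sq_ge0.
rewrite ler_pdivlMr // -subr_ge0.
have -> : s * dotv u u + dotv v v / s - dotv u v * 2 =
    (s * (s * dotv u u) - 2 * s * dotv u v + dotv v v) / s.
  by field; rewrite gt_eqF.
by apply: divr_ge0; lra.
Qed.

Lemma dotv_le_enorm s u v :
  0 < s -> enorm u <= s * enorm v -> dotv u v <= s * dotv v v.
Proof.
move=> s_gt0 uv; have := @dotv_young s^-1 u v; rewrite invr_gt0 => /(_ s_gt0).
rewrite invrK; suff : s^-1 * dotv u u <= s * dotv v v by lra.
rewrite ler_pdivrMl // -!enorm_sq mulrA -expr2 -exprMn.
by rewrite ler_sqr // nnegrE ?sqrtr_ge0 // mulr_ge0 ?sqrtr_ge0 // ltW.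
Qed.

Lemma dotv_mean_le {n} (a : 'I_n -> 'rV[R]_d) : (0 < n)%N ->
  dotv (n%:R^-1 *: \sum_(m < n) a m) (n%:R^-1 *: \sum_(m < n) a m)
  <= n%:R^-1 * \sum_(m < n) dotv (a m) (a m).
Proof.
move=> n_gt0; set D := n%:R^-1 *: _; have n_gtR0 : 0 < n%:R :> R by rewrite ltr0n.
have sumE : \sum_(m < n) a m = n%:R *: D.
  by rewrite /D scalerA mulfV ?gt_eqF // scale1r.
have : 0 <= \sum_(m < n) dotv (a m - D) (a m - D).
  by apply: sumr_ge0 => m _; exact: dotv_ge0.
have -> : \sum_(m < n) dotv (a m - D) (a m - D) =
    \sum_(m < n) dotv (a m) (a m) - 2 * dotv (\sum_(m < n) a m) D
      + \sum_(m < n) dotv D D.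
  rewrite dotv_suml mulr_sumr -sumrB -big_split /=.
  by apply: eq_bigr => m _; rewrite !dotvBl !dotvBr (dotvC D (a m)); ring.
rewrite sumE dotvZl sumr_const card_ord -mulr_natl => ge0.
by rewrite ler_pdivlMl //; lra.
Qed.

End InnerProduct.

Definition upper_quadratic {R : realType} {d : nat}
    (L : R) (f : 'rV[R]_d -> R) (g : 'rV[R]_d -> 'rV[R]_d) : Prop :=
  forall x v, f (x + v) <= f x + dotv (g x) v + L / 2 * dotv v v.

Section FirstOrderBounds.
Context {R : realType} {d : nat} {f : 'rV[R]_d -> R} {g : 'rV[R]_d -> 'rV[R]_d}.

Lemma is_derive_line x v (t : R) : is_gradient f g ->
  is_derive t 1 (fun s : R => f (s *: v + x)) (dotv (g (t *: v + x)) v).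
Proof.
move=> fg; pose line := fun s : R => s *: v + x.
have line_diff : is_diff t line (( *:%R ^~ v) + 0).
  have -> : line = ( *:%R ^~ v) + cst x by apply/funext.
  exact: is_diffD.
have [f_diff df] := fg (line t).
have line_dd : differentiable line t by case: line_diff.
have comp_diff : differentiable (f \o line) t by exact: differentiable_comp.
apply: DeriveDef; first exact: diff_derivable.
rewrite deriveE // diff_comp //= [X in X 1]diff_val /= df.
by rewrite /= addr0 scale1r.
Qed.

Lemma descent {L : R} : is_gradient f g -> lipschitz_grad L g -> 0 < L ->
  upper_quadratic L f g.
Proof.
move=> fg g_lip L_gt0 x v.
set c1 := dotv (g x) v; set c2 := L / 2 * dotv v v.
pose psi := (fun s : R => f (s *: v + x)) - c1 \*: (@idfun R)
  - c2 \*: ((@idfun R) * (@idfun R)).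
pose dpsi := fun s : R => dotv (g (s *: v + x)) v - c1 - c2 * (2 * s).
have psi_deriv (t : R) : is_derive t (1 : R) psi (dpsi t).
  have psi'E := is_deriveB (is_deriveB (is_derive_line x v t fg)
    (is_deriveZ c1 (is_derive_id t 1)))
    (is_deriveZ c2 (is_deriveM (is_derive_id t (1 : R)) (is_derive_id t 1))).
  apply: (is_derive_eq psi'E).
  by rewrite /dpsi /GRing.scale /=; ring.
have [c /andP[c_gt0 c_lt1] psiE] : exists2 c : R, c \in `]0, 1[ &
    psi 1 - psi 0 = dpsi c * (1 - 0).
  apply: MVT => //; apply: derivable_within_continuous => t _.
  by have [] := psi_deriv t.
have increment : dotv (g (c *: v + x) - g x) v <= L * c * dotv v v.
  apply: dotv_le_enorm; first exact: mulr_gt0.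
  by have := g_lip (c *: v + x) x; rewrite addrK enormZ ?mulrA // ltW.
have : dpsi c <= 0 by rewrite /dpsi -dotvBl /c2; lra.
move: psiE; rewrite /psi !fctE /= !scale1r scale0r add0r (addrC v x) /GRing.scale /=.
lra.
Qed.

Lemma strongly_convex_le_upper {U L : R} : (0 < d)%N ->
  strongly_convex U f g -> upper_quadratic L f g -> U <= L.
Proof.
move=> d_gt0 f_conv f_upper; pose v : 'rV[R]_d := const_mx 1.
have vv_gt0 : 0 < dotv v v.
  rewrite /dotv (eq_bigr (fun _ => 1)); last by move=> i _; rewrite !mxE mulr1.
  by rewrite sumr_const card_ord ltr0n.
have := f_conv 0 v; have := f_upper 0 v; rewrite add0r subr0.
by move=> le1 le2; rewrite -(ler_pM2r vv_gt0) -(ler_pM2r (_ : 0 < 2^-1)) //; lra.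
Qed.

Lemma strongly_convex_lower {U : R} : strongly_convex U f g ->
  forall x v, f x + dotv (g x) v + U / 2 * dotv v v <= f (x + v).
Proof. by move=> f_conv x v; have := f_conv x (x + v); rewrite [x + v - x]addrC addKr. Qed.

Lemma polyak_lojasiewicz {U : R} x y :
  0 < U -> strongly_convex U f g -> (f x - f y) * (2 * U) <= dotv (g x) (g x).
Proof.
move=> U_gt0 f_conv; have := f_conv x y; set v := y - x.
have := dotv_young U v (- g x) U_gt0; rewrite dotvNr dotvNl dotvNr opprK dotvC.
rewrite -ler_pdivlMr ?mulr_gt0 // => young lower.
have -> : dotv (g x) (g x) / (2 * U) = dotv (g x) (g x) / U / 2.
  by field; rewrite gt_eqF.
lra.
Qed.

End FirstOrderBounds.

Section WeightedAverage.
Context {R : realType} {d M : nat} {w : 'I_M -> R}.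
Context {F : 'I_M -> 'rV[R]_d -> R} {gF : 'I_M -> 'rV[R]_d -> 'rV[R]_d}.
Hypotheses (w_ge0 : forall m, 0 <= w m) (w_sum1 : \sum_(m < M) w m = 1).

Lemma wavg_affine x v (c : R) :
  \sum_(m < M) w m * (F m x + dotv (gF m x) v + c) =
  \sum_(m < M) w m * F m x + dotv (\sum_(m < M) w m *: gF m x) v + c.
Proof.
rewrite (eq_bigr (fun m => w m * F m x + dotv (w m *: gF m x) v + w m * c)).
  by rewrite !big_split /= -mulr_suml w_sum1 mul1r dotv_suml.
by move=> m _; rewrite dotvZl; ring.
Qed.

Lemma upper_quadratic_wavg {L : R} :
  (forall m, upper_quadratic L (F m) (gF m)) ->
  upper_quadratic L (fun x => \sum_(m < M) w m * F m x)
                    (fun x => \sum_(m < M) w m *: gF m x).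
Proof.
move=> F_upper x v; rewrite /= -wavg_affine.
by apply: ler_sum => m _; apply: ler_wpM2l; [exact: w_ge0 | exact: F_upper].
Qed.

Lemma strongly_convex_wavg {U : R} :
  (forall m, strongly_convex U (F m) (gF m)) ->
  strongly_convex U (fun x => \sum_(m < M) w m * F m x)
                    (fun x => \sum_(m < M) w m *: gF m x).
Proof.
move=> F_conv x y; rewrite /= -wavg_affine.
by apply: ler_sum => m _; apply: ler_wpM2l; [exact: w_ge0 | exact: F_conv].
Qed.

End WeightedAverage.

Lemma local_accurate_bound {R : realType} {d : nat} {L U eps : R}
    {F : 'rV[R]_d -> R} {gF : 'rV[R]_d -> 'rV[R]_d} {th c h : 'rV[R]_d} :
  0 < L -> eps <= 1 -> upper_quadratic L F gF -> strongly_convex U F gF ->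
  local_accurate (fun v => F (th + v) - dotv (gF th - c) v) eps h ->
  dotv c h + U / 2 * dotv h h <= - ((1 - eps) * (dotv c c / (2 * L))).
Proof.
move=> L_gt0 eps_le1 F_upper F_conv.
set G := fun v => F (th + v) - dotv (gF th - c) v => - [hs [hs_min hs_acc]].
have G0 : G 0 = F th by rewrite /G addr0 dotv0r subr0.
have G_hs : G hs <= F th - dotv c c / (2 * L).
  apply: le_trans (hs_min (- L^-1 *: c)) _.
  have := F_upper th (- L^-1 *: c); rewrite /G dotvBl !dotvZr !dotvZl.
  have -> : L / 2 * (- L^-1 * (- L^-1 * dotv c c)) = dotv c c / (2 * L).
    by field; rewrite gt_eqF.
  have -> : - L^-1 * dotv c c = - (2 * (dotv c c / (2 * L))).
    by field; rewrite gt_eqF.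
  lra.
have G_h : F th + dotv c h + U / 2 * dotv h h <= G h.
  have := strongly_convex_lower F_conv th h; rewrite /G dotvBl; lra.
have : (1 - eps) * G hs <= (1 - eps) * (F th - dotv c c / (2 * L)).
  by apply: ler_wpM2l; lra.
rewrite G0 in hs_acc; lra.
Qed.

Lemma dotv_affine_mean_le {R : realType} {d n : nat} {U K : R}
    {c : 'rV[R]_d} {h : 'I_n -> 'rV[R]_d} :
  (0 < n)%N -> 0 <= U ->
  (forall m, dotv c (h m) + U / 2 * dotv (h m) (h m) <= K) ->
  dotv c (n%:R^-1 *: \sum_(m < n) h m)
    + U / 2 * dotv (n%:R^-1 *: \sum_(m < n) h m) (n%:R^-1 *: \sum_(m < n) h m)
  <= K.
Proof.
move=> n_gt0 U_ge0 h_le; have n_inv_gt0 : 0 < n%:R^-1 :> R by rewrite invr_gt0 ltr0n.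
have := dotv_mean_le h n_gt0; set D := n%:R^-1 *: _ => mean_le.
set S := \sum_(m < n) dotv (h m) (h m) in mean_le.
have sum_le : \sum_(m < n) dotv c (h m) + U / 2 * S <= n%:R * K.
  rewrite /S mulr_sumr -big_split /=.
  apply: le_trans (ler_sum _ (fun m _ => h_le m)) _.
  by rewrite sumr_const card_ord mulr_natl.
have quad_le : U / 2 * dotv D D <= U / 2 * (n%:R^-1 * S).
  by apply: ler_wpM2l => //; lra.
have : n%:R^-1 * (\sum_(m < n) dotv c (h m) + U / 2 * S) <= n%:R^-1 * (n%:R * K).
  by rewrite ler_pM2l.
rewrite mulrA mulVf ?mul1r ?gt_eqF ?ltr0n // /D dotvZr dotv_sumr -/D; lra.
Qed.

Section AggregationRound.
Context {R : realType} {d M : nat}.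
Context {F : 'I_M -> 'rV[R]_d -> R} {gF : 'I_M -> 'rV[R]_d -> 'rV[R]_d}.
Context {f : 'rV[R]_d -> R} {g : 'rV[R]_d -> 'rV[R]_d} {L U rho eps : R}.
Hypotheses (M_gt0 : (0 < M)%N) (L_gt0 : 0 < L) (rho_gt0 : 0 < rho)
  (rhoL_le : rho * L <= U) (eps_le1 : eps <= 1).
Hypotheses (F_upper : forall m, upper_quadratic L (F m) (gF m))
  (F_conv : forall m, strongly_convex U (F m) (gF m))
  (f_upper : upper_quadratic L f g).

Lemma aggregation_decrease th (h : 'I_M -> 'rV[R]_d) :
  (forall m, local_accurate (local_obj (F m) (gF m) g rho th) eps (h m)) ->
  f (th + M%:R^-1 *: \sum_(m < M) h m) - f th
    <= - ((1 - eps) * rho / (2 * L) * dotv (g th) (g th)).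
Proof.
move=> h_acc.
have U_ge0 : 0 <= U by apply: le_trans rhoL_le; rewrite mulr_ge0 // ltW.
have := dotv_affine_mean_le M_gt0 U_ge0
  (fun m => local_accurate_bound L_gt0 eps_le1 (F_upper m) (F_conv m) (h_acc m)).
have := f_upper th (M%:R^-1 *: \sum_(m < M) h m).
move: (M%:R^-1 *: _) => D f_upD.
rewrite dotvZl [dotv (rho *: _) _]dotvZl dotvZr => D_le.
have : rho * L / 2 * dotv D D <= U / 2 * dotv D D.
  by apply: ler_wpM2r; [exact: dotv_ge0 | move: rhoL_le; lra].
have : rho * (f (th + D) - f th) <= rho * (dotv (g th) D + L / 2 * dotv D D).
  by apply: ler_wpM2l; [exact: ltW | lra].
move=> f_le quad_le; rewrite -(ler_pM2l rho_gt0).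
rewrite (_ : rho * - _ = - ((1 - eps) * (rho * (rho * dotv (g th) (g th)) / (2 * L)))).
  lra.
by field; rewrite gt_eqF.
Qed.

Lemma aggregation_contraction th (h : 'I_M -> 'rV[R]_d) y :
  0 < U -> strongly_convex U f g ->
  (forall m, local_accurate (local_obj (F m) (gF m) g rho th) eps (h m)) ->
  f (th + M%:R^-1 *: \sum_(m < M) h m) - f y
    <= (1 - (1 - eps) * rho * U / L) * (f th - f y).
Proof.
move=> U_gt0 f_conv h_acc; have := aggregation_decrease _ _ h_acc.
have PL := polyak_lojasiewicz th y U_gt0 f_conv.
have : (1 - eps) * rho * U / L * (f th - f y)
    <= (1 - eps) * rho / (2 * L) * dotv (g th) (g th).
  rewrite (_ : _ * (f th - f y) = (1 - eps) * rho / (2 * L) * ((f th - f y) * (2 * U))).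
    apply: ler_wpM2l => //; apply: divr_ge0; last by rewrite mulr_ge0 // ltW.
    by apply: mulr_ge0; [rewrite subr_ge0 | exact: ltW].
  by field; rewrite gt_eqF.
lra.
Qed.

End AggregationRound.

Lemma geometric_decay_expR {R : realType} {e : nat -> R} {k : R} :
  (forall n, 0 <= e n) -> (forall n, e n.+1 <= (1 - k) * e n) ->
  forall n, e n <= expR (- (k * n%:R)) * e 0%N.
Proof.
move=> e_ge0 e_step; elim=> [|n IH]; first by rewrite mulr0 oppr0 expR0 mul1r.
apply: le_trans (e_step n) _.
have one_sub_le : 1 - k <= expR (- k) by have := expR_ge1Dx (- k).
apply: le_trans (ler_wpM2r (e_ge0 n) one_sub_le) _.
rewrite mulrS mulrDr mulr1 opprD expRD -mulrA.
by apply: ler_wpM2l; [exact: expR_ge0 | exact: IH].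
Qed.

Lemma expRN_le {R : realType} {k eps : R} : 0 < eps -> ln eps^-1 <= k ->
  expR (- k) <= eps.
Proof.
move=> eps_gt0; have eps_pos : eps \is Num.pos by rewrite posrE.
by rewrite lnV // -{2}(lnK eps_pos) ler_expR; lra.
Qed.

Lemma ln_inv_le_rate {R : realType} {L U rho epsL epsU N : R} :
  0 < U <= L -> 0 < rho -> epsL < 1 -> 0 < epsU < 1 ->
  2 * L ^+ 2 / (U ^+ 2 * rho * (1 - epsL)) * ln epsU^-1 <= N ->
  ln epsU^-1 <= (1 - epsL) * rho * U / L * N.
Proof.
move=> /andP[U_gt0 U_le_L] rho_gt0 epsL_lt1 /andP[epsU_gt0 epsU_lt1] N_ge.
have L_gt0 : 0 < L by exact: lt_le_trans U_le_L.
have l_ge0 : 0 <= ln epsU^-1 by rewrite ln_ge0 // invf_ge1 // ltW.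
have rate_ge0 : 0 <= (1 - epsL) * rho * U / L.
  by apply: divr_ge0; [rewrite !mulr_ge0 // ?subr_ge0 |]; exact: ltW.
apply: le_trans (ler_wpM2l rate_ge0 N_ge).
rewrite (_ : _ * (_ * ln epsU^-1) = 2 * L / U * ln epsU^-1).
  by rewrite ler_peMl // ler_pdivlMr // mul1r; lra.
by field; rewrite !gt_eqF ?subr_gt0.
Qed.

Theorem proposition2 (R : realType) (d M : nat) (hM : (0 < M)%N)
  (F : 'I_M -> 'rV[R]_d -> R) (gF : 'I_M -> 'rV[R]_d -> 'rV[R]_d)
  (L U : R) (hL : 0 < L) (hU : 0 < U)
  (hgrad : forall m, is_gradient (F m) (gF m))
  (hlip : forall m, lipschitz_grad L (gF m))
  (hconv : forall m, strongly_convex U (F m) (gF m))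
  (w : 'I_M -> R) (hw : forall m, 0 < w m) (hw1 : \sum_(m < M) w m = 1)
  (thstar : 'rV[R]_d)
  (hstar : forall th, \sum_(m < M) w m * F m thstar <= \sum_(m < M) w m * F m th)
  (epsL epsU rho : R) (heL : 0 < epsL < 1) (heU : 0 < epsU < 1)
  (hrho : 0 < rho) (hrho' : rho <= U / L)
  (theta : nat -> 'rV[R]_d) (h : nat -> 'I_M -> 'rV[R]_d)
  (hloc : forall n m,
     local_accurate
       (local_obj (F m) (gF m) (fun th => \sum_(k < M) w k *: gF k th) rho (theta n))
       epsL (h n m))
  (hstep : forall n,
     theta n.+1 = theta n + M%:R^-1 *: \sum_(m < M) h n m) :
  let Lg := fun th => \sum_(m < M) w m * F m th in
  let Ncheck := 2 * L ^+ 2 / (U ^+ 2 * rho * (1 - epsL)) * ln epsU^-1 in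
  forall n : nat, Ncheck <= n%:R ->
    Lg (theta n) - Lg thstar <= epsU * (Lg (theta 0%N) - Lg thstar).
Proof.
move=> Lg Ncheck n n_ge; have [/andP[_ epsL_lt1] /andP[epsU_gt0 _]] := (heL, heU).
have [d0 | d_gt0] := posnP d.
  subst d.
  by rewrite (thinmx0 (theta n)) (thinmx0 thstar) (thinmx0 (theta 0%N)) subrr mulr0.
have w_ge0 m : 0 <= w m by exact: ltW.
have F_upper m : upper_quadratic L (F m) (gF m) by exact: descent.
have Lg_upper := upper_quadratic_wavg w_ge0 hw1 F_upper.
have Lg_conv := strongly_convex_wavg w_ge0 hw1 hconv.
have rhoL_le : rho * L <= U by rewrite -ler_pdivlMr.
pose e k := Lg (theta k) - Lg thstar.
have e_ge0 k : 0 <= e k by rewrite subr_ge0; exact: hstar.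
have e_contract k : e k.+1 <= (1 - (1 - epsL) * rho * U / L) * e k.
  rewrite /e hstep; exact: (aggregation_contraction hM hL hrho rhoL_le (ltW epsL_lt1)
    F_upper hconv Lg_upper _ _ _ hU Lg_conv (hloc k)).
have U_bounds : 0 < U <= L by rewrite hU (strongly_convex_le_upper d_gt0 Lg_conv Lg_upper).
apply: (le_trans (geometric_decay_expR e_ge0 e_contract n)).
apply: ler_wpM2r; [exact: e_ge0 | apply: expRN_le epsU_gt0 _].
exact: ln_inv_le_rate U_bounds hrho epsL_lt1 heU n_ge.
Qed.
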